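(* Let $(A_k,b_k,c_k)_{k\in\mathbb{Z}}$ and $(\tilde A_k,\tilde b_k,\tilde c_k)_{k\in\mathbb{Z}}$ be algebraically equivalent discrete-time systems, with $(\tilde A_k,\tilde b_k,\tilde c_k)$ in controller canonical form. Then for every $k\in\mathbb{Z}$, the first coordinate of $\tilde c_k$ is zero if and only if $c_k\operatorname{adj}(A_k)b_k=0$.
   Context: A system $(A_k,b_k,c_k)$ means $x_{k+1}=A_kx_k+b_ku_k$, $y_k=c_kx_k$ with $A_k\in\mathbb{R}^{n\times n}$, $b_k\in\mathbb{R}^{n\times1}$, $c_k\in\mathbb{R}^{1\times n}$. Algebraic equivalence: there are invertible $T_k$ with $\tilde A_k=T_{k+1}A_kT_k^{-1}$, $\tilde b_k=T_{k+1}b_k$, $\tilde c_k=c_kT_k^{-1}$ for all $k$. Controller canonical form: $\tilde b_k=(0,\dots,0,1)^T$ and $\tilde A_k$ has ones on the superdiagonal, zeros elsewhere in the first $n-1$ rows, and an arbitrary last row. $\operatorname{adj}$ denotes the adjugate matrix. *)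

From HB Require Import structures.
From mathcomp Require Import all_boot all_order all_algebra.
Set Implicit Arguments. Unset Strict Implicit. Unset Printing Implicit Defensive.
Import Order.TTheory GRing.Theory Num.Theory.
Local Open Scope ring_scope.

(* A discrete-time system (A_k, b_k, c_k)_{k in Z} of state dimension n:
   x_{k+1} = A_k x_k + b_k u_k,  y_k = c_k x_k. *)

Definition alg_equiv (R : comUnitRingType) (n : nat)
  (A : int -> 'M[R]_n) (b : int -> 'cV[R]_n) (c : int -> 'rV[R]_n)
  (A' : int -> 'M[R]_n) (b' : int -> 'cV[R]_n) (c' : int -> 'rV[R]_n) : Prop :=
  exists T : int -> 'M[R]_n,
    (forall k, T k \in unitmx) /\
    (forall k, A' k = T (k + 1) *m A k *m invmx (T k)
            /\ b' k = T (k + 1) *m b k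
            /\ c' k = c k *m invmx (T k)).

Definition controller_canonical (R : nzRingType) (n : nat)
  (A' : int -> 'M[R]_n.+1) (b' : int -> 'cV[R]_n.+1) : Prop :=
  forall k,
    b' k = \col_(i < n.+1) (if i == ord_max then 1 else 0)
    /\ (forall i j : 'I_n.+1, i != ord_max ->
          A' k i j = (if (j : nat) == i.+1 then 1 else 0)).

From HB Require Import structures.
From mathcomp Require Import all_boot all_order all_algebra.
Import GRing.Theory.
Local Open Scope ring_scope.

(* Since the adjugate reverses products and [P *m \adj P = (\det P)%:M], the
   scalar [c *m \adj A *m b] of an equivalent system is the original one times
   [\det (T_k^-1) * \det T_(k+1)], a unit.  For a system in controller canonical
   form the last column of [\adj A] is [(-1)^n] times the first unit vector:
   its first minor is an identity matrix and every other minor has a zero first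
   column.  Hence [c *m \adj A *m b = (-1)^n * c_0]. *)

Lemma adjM_det_neq0 (R : idomainType) n (M N : 'M[R]_n) :
  \det (M *m N) != 0 -> \adj (M *m N) = \adj N *m \adj M.
Proof.
move=> detMN_neq0; apply/eqP; rewrite -subr_eq0.
set D := _ - _.
have MN_D : M *m N *m D = 0.
  rewrite mulmxBr mul_mx_adj mulmxA -(mulmxA M) mul_mx_adj mul_mx_scalar.
  by rewrite -scalemxAl mul_mx_adj scale_scalar_mx det_mulmx mulrC subrr.
have := congr1 (mulmx (\adj (M *m N))) MN_D.
rewrite mulmxA mul_adj_mx mul_scalar_mx mulmx0 => /eqP.
by rewrite scalemx_eq0 (negbTE detMN_neq0).
Qed.

Lemma adjM (R : idomainType) n (M N : 'M[R]_n) :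
  \adj (M *m N) = \adj N *m \adj M.
Proof.
(* [\det ('X + X)] is monic, so the identity holds over [{poly R}] by
   [adjM_det_neq0], and specializes at ['X = 0]. *)
pose shift (X : 'M[R]_n) := char_poly_mx (- X).
have det_shift_neq0 X : \det (shift X) != 0.
  exact/monic_neq0/char_poly_monic.
have eval_shift X : map_mx (horner_eval 0) (shift X) = X.
  apply/matrixP => i j; rewrite !mxE horner_evalE.
  by rewrite hornerD hornerN hornerMn hornerX hornerC mul0rn sub0r opprK.
have := @adjM_det_neq0 _ _ (shift M) (shift N).
rewrite det_mulmx mulf_neq0 // => /(_ isT)/(congr1 (map_mx (horner_eval 0))).
by rewrite map_mxM !map_mx_adj map_mxM !eval_shift.
Qed.

Lemma mulmx_adj_equiv (R : idomainType) n (A P Q : 'M[R]_n)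
    (b : 'cV[R]_n) (c : 'rV[R]_n) :
  c *m P *m \adj (Q *m A *m P) *m (Q *m b)
  = (\det P * \det Q) *: (c *m \adj A *m b).
Proof.
rewrite !adjM !mulmxA -(mulmxA c) mul_mx_adj mul_mx_scalar.
rewrite -(mulmxA _ (\adj Q)) mul_adj_mx mul_mx_scalar.
by rewrite -!scalemxAl scalerA mulrC.
Qed.

Section ControllerCanonicalAdjugate.
Context {R : comNzRingType} {n : nat} {A : 'M[R]_n.+1}.
Hypothesis A_shift : forall i j : 'I_n.+1, i != ord_max ->
  A i j = (if (j : nat) == i.+1 then 1 else 0).

Lemma controller_lift_max (r : 'I_n) (j : 'I_n.+1) :
  A (lift ord_max r) j = (if (j : nat) == r.+1 then 1 else 0).
Proof. by rewrite A_shift ?lift_max // eq_sym neq_lift. Qed.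

Lemma adj_controller_col_max (i : 'I_n.+1) :
  \adj A i ord_max = if i == ord0 then (-1) ^+ n else 0.
Proof.
rewrite mxE /cofactor; have [-> | i_neq0] := eqVneq i ord0.
  suff -> : row' ord_max (col' ord0 A) = 1%:M by rewrite det1 mulr1 addn0.
  apply/matrixP => r s; rewrite !mxE controller_lift_max lift0 eqSS.
  by rewrite -[(s : nat) == r]/(s == r) eq_sym; case: (r == s).
have i_gt0 : (0 < i)%N by rewrite lt0n.
have n_gt0 : (0 < n)%N by rewrite (leq_trans i_gt0) // -ltnS.
rewrite (expand_det_col _ (Ordinal n_gt0)) big1 ?mulr0 // => r _.
by rewrite !mxE controller_lift_max /= /bump leqNgt i_gt0 mul0r.
Qed.

Lemma mulmx_adj_controller (c : 'rV[R]_n.+1) :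
  (c *m \adj A *m \col_i (if i == ord_max then 1 else 0)) 0 0 = (-1) ^+ n * c 0 0.
Proof.
have -> : \col_i (if i == ord_max then 1 else 0)
          = delta_mx ord_max 0 :> 'cV[R]_n.+1.
  by apply/matrixP => i j; rewrite !mxE ord1 eqxx andbT; case: (i == ord_max).
rewrite -mulmxA -colE mxE (bigD1 ord0) //= big1 => [|j /negbTE j_neq0].
  by rewrite mxE adj_controller_col_max eqxx addr0 mulrC.
by rewrite mxE adj_controller_col_max j_neq0 mulr0.
Qed.

End ControllerCanonicalAdjugate.

Theorem proposition7 (R : realFieldType) (n : nat)
  (A : int -> 'M[R]_n.+1) (b : int -> 'cV[R]_n.+1) (c : int -> 'rV[R]_n.+1)
  (A' : int -> 'M[R]_n.+1) (b' : int -> 'cV[R]_n.+1) (c' : int -> 'rV[R]_n.+1) :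
  alg_equiv A b c A' b' c' ->
  controller_canonical A' b' ->
  forall k : int, c' k 0 0 = 0 <-> (c k *m \adj (A k) *m b k) 0 0 = 0.
Proof.
move=> [T [T_unit T_equiv]] canonical_form k.
have [b'_last A'_shift] := canonical_form k.
have [A'_eq [b'_eq c'_eq]] := T_equiv k.
set s := \det (invmx (T k)) * \det (T (k + 1)).
have s_neq0 : s != 0 by rewrite mulf_neq0 // -unitfE -unitmxE ?unitmx_inv.
have key : s * (c k *m \adj (A k) *m b k) 0 0 = (-1) ^+ n * c' k 0 0.
  rewrite -(mulmx_adj_controller A'_shift) -b'_last c'_eq A'_eq b'_eq.
  by rewrite mulmx_adj_equiv [RHS]mxE.
have iff_eq0 : ((c k *m \adj (A k) *m b k) 0 0 == 0) = (c' k 0 0 == 0).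
  by rewrite -(inj_eq (mulfI s_neq0)) mulr0 key mulf_eq0 signr_eq0.
by split=> /eqP zero; apply/eqP; move: zero; rewrite iff_eq0.
Qed.
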